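(* For every $\kappa>1$ there exist $\rho\ge 1+\ln\kappa$ and a non-decreasing, concave, differentiable function $v:[0,1]\to\mathbb{R}_{\ge0}$ with $v(1)=1$ and $v'(0)/v(1)=\kappa$ such that for every price $p>0$ and every $z\in\arg\max_{z'\in[0,1]}(v(z')-pz')$, one has $p\,z\le 1/\rho$. Consequently, for a single agent whose valuation is $v$ with probability $1$, every linear pricing obtains revenue at most a $1/\rho$ fraction of the revenue $v(1)=1$ obtained by the non-linear pricing that charges $v(z)$ for fraction $z$.
   Context: Linear pricing at price $p$ per unit charges $pz$ for a fraction $z$ of a divisible item; a buyer with valuation $v$ buys a fraction maximizing $v(z)-pz$ over $z\in[0,1]$, and the seller's revenue is $p$ times that fraction. The curvature of $v$ is $v'(0)/v(1)$. *)

From Stdlib Require Import Reals Lra.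
Open Scope R_scope.

(* d is the derivative of v at x, relative to the domain [0,1]
   (one-sided at the endpoints 0 and 1, two-sided in the interior). *)
Definition deriv01 (v : R -> R) (x d : R) : Prop :=
  forall eps : R, 0 < eps -> exists delta : R, 0 < delta /\
    forall y : R, 0 <= y <= 1 -> y <> x -> Rabs (y - x) < delta ->
      Rabs ((v y - v x) / (y - x) - d) < eps.

Definition differentiable01 (v : R -> R) : Prop :=
  forall x : R, 0 <= x <= 1 -> exists d : R, deriv01 v x d.

Definition nondecreasing01 (v : R -> R) : Prop :=
  forall x y : R, 0 <= x -> x <= y -> y <= 1 -> v x <= v y.

Definition concave01 (v : R -> R) : Prop :=
  forall x y t : R, 0 <= x <= 1 -> 0 <= y <= 1 -> 0 <= t <= 1 ->
    t * v x + (1 - t) * v y <= v (t * x + (1 - t) * y).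

Definition nonneg01 (v : R -> R) : Prop :=
  forall x : R, 0 <= x <= 1 -> 0 <= v x.

Definition best_response (v : R -> R) (p z : R) : Prop :=
  0 <= z <= 1 /\ forall z' : R, 0 <= z' <= 1 -> v z' - p * z' <= v z - p * z.

(* For 0 < a < 1 let  u_a(z) = z / a  on [0, a]  and  u_a(z) = 1 + ln (z / a)  on [a, 1]:
   a linear-then-logarithmic valuation with slope s_a(x) = 1 / max(a, x).  The slope is a
   supergradient of u_a (u_a(y) <= u_a(x) + s_a(x) (y - x)), strict as soon as one of the
   points lies beyond the kink a.  Hence a buyer facing unit price P who buys z > a must
   have z <= 1/P (buying max(a, 1/P) would be strictly better), while for z <= a the
   comparison with buying nothing gives P z <= z / a <= 1: the payment is at most 1.
   Normalizing by rho = u_a(1) = 1 - ln a gives a valuation v with v(1) = 1, curvature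
   v'(0) = 1 / (a rho), and linear revenue at most 1 / rho.  Choosing t > 0 with
   e^t = kappa (1 + t) and a = e^(-t) makes the curvature exactly kappa, with
   rho = 1 + t >= 1 + ln kappa. *)

From Stdlib Require Import Reals Lra.
Open Scope R_scope.

Lemma div_neq_1 (u w : R) : 0 < w -> u <> w -> u / w <> 1.
Proof. intros Hw Huw E. apply Huw. replace u with (u / w * w) by (field; lra). rewrite E. ring. Qed.

Lemma ln_lt_sub1 (r : R) : 0 < r -> r <> 1 -> ln r < r - 1.
Proof.
  intros Hr Hr1. pose proof (exp_ineq1 (ln r) (ln_neq_0 r Hr1 Hr)) as H.
  rewrite exp_ln in H; lra.
Qed.

Definition supergradient01 (f g : R -> R) : Prop :=
  forall x y : R, 0 <= x <= 1 -> 0 <= y <= 1 -> f y <= f x + g x * (y - x).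

Definition lipschitz01 (g : R -> R) (L : R) : Prop :=
  forall x y : R, 0 <= x <= 1 -> 0 <= y <= 1 -> Rabs (g y - g x) <= L * Rabs (y - x).

Section Supergradient.
Variables f g : R -> R.
Hypothesis f_super : supergradient01 f g.

(* Averaging the supergradient inequalities at the convex combination w gives concavity. *)
Lemma supergradient_concave : concave01 f.
Proof.
  intros x y t Hx Hy Ht.
  set (w := t * x + (1 - t) * y).
  assert (Hw : 0 <= w <= 1) by (unfold w; split; nra).
  assert (Hfx : t * f x <= t * (f w + g w * (x - w)))
    by (apply Rmult_le_compat_l; [lra | apply f_super; assumption]).
  assert (Hfy : (1 - t) * f y <= (1 - t) * (f w + g w * (y - w)))
    by (apply Rmult_le_compat_l; [lra | apply f_super; assumption]).
  assert (Hbal : t * (x - w) + (1 - t) * (y - w) = 0) by (unfold w; ring).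
  nra.
Qed.

Lemma supergradient_nondecreasing :
  (forall x : R, 0 <= x <= 1 -> 0 <= g x) -> nondecreasing01 f.
Proof.
  intros g_nonneg x y H0x Hxy Hy1.
  pose proof (f_super y x ltac:(lra) ltac:(lra)).
  pose proof (g_nonneg y ltac:(lra)). nra.
Qed.

(* Each difference quotient lies between the supergradients at its two endpoints. *)
Lemma supergradient_quotient (x y : R) : 0 <= x <= 1 -> 0 <= y <= 1 -> x <> y ->
  Rabs ((f y - f x) / (y - x) - g x) <= Rabs (g y - g x).
Proof.
  intros Hx Hy Hxy.
  set (q := (f y - f x) / (y - x)).
  assert (Hq : f y - f x = q * (y - x)) by (unfold q; field; lra).
  pose proof (f_super x y Hx Hy). pose proof (f_super y x Hy Hx).
  destruct (Rlt_or_le x y) as [Hlt | Hge].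
  - assert (q <= g x) by (apply Rmult_le_reg_r with (y - x); lra).
    assert (g y <= q) by (apply Rmult_le_reg_r with (y - x); lra).
    unfold Rabs; repeat destruct Rcase_abs; lra.
  - assert (g x <= q) by (apply Rmult_le_reg_r with (x - y); lra).
    assert (q <= g y) by (apply Rmult_le_reg_r with (x - y); lra).
    unfold Rabs; repeat destruct Rcase_abs; lra.
Qed.

Lemma supergradient_deriv (L x : R) :
  lipschitz01 g L -> 0 <= x <= 1 -> deriv01 f x (g x).
Proof.
  intros g_lip Hx eps Heps.
  assert (HL : 0 <= L).
  { pose proof (g_lip 0 1 ltac:(lra) ltac:(lra)) as H01.
    pose proof (Rabs_pos (g 1 - g 0)).
    replace (Rabs (1 - 0)) with 1 in H01 by (rewrite Rminus_0_r, Rabs_R1; reflexivity).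
    lra. }
  exists (eps / (L + 1)). split; [apply Rdiv_lt_0_compat; lra |].
  intros y Hy Hyx Hclose.
  pose proof (supergradient_quotient x y Hx Hy (not_eq_sym Hyx)).
  pose proof (g_lip x y Hx Hy).
  assert (L * Rabs (y - x) <= L * (eps / (L + 1)))
    by (apply Rmult_le_compat_l; lra).
  assert (L * (eps / (L + 1)) < eps).
  { apply Rmult_lt_reg_r with (L + 1); [lra |].
    replace (L * (eps / (L + 1)) * (L + 1)) with (L * eps) by (field; lra). nra. }
  lra.
Qed.

End Supergradient.

Lemma supergradient_scale (f g : R -> R) (c : R) : 0 < c ->
  supergradient01 f g -> supergradient01 (fun x => f x / c) (fun x => g x / c).
Proof.
  intros Hc Hsup x y Hx Hy.
  replace (f x / c + g x / c * (y - x)) with ((f x + g x * (y - x)) / c) by (field; lra).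
  apply Rmult_le_compat_r; [left; apply Rinv_0_lt_compat; lra | auto].
Qed.

Lemma lipschitz_scale (g : R -> R) (L c : R) : 0 < c ->
  lipschitz01 g L -> lipschitz01 (fun x => g x / c) (L / c).
Proof.
  intros Hc Hlip x y Hx Hy.
  replace (g y / c - g x / c) with ((g y - g x) * / c) by (field; lra).
  rewrite Rabs_mult, (Rabs_right (/ c)) by (left; apply Rinv_0_lt_compat; lra).
  replace (L / c * Rabs (y - x)) with (L * Rabs (y - x) * / c) by (field; lra).
  apply Rmult_le_compat_r; [left; apply Rinv_0_lt_compat; lra | auto].
Qed.

Lemma best_response_scale (f : R -> R) (c p z : R) : 0 < c ->
  best_response (fun x => f x / c) p z -> best_response f (p * c) z.
Proof.
  intros Hc [Hz Hbest]. split; [exact Hz |].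
  intros w Hw. pose proof (Hbest w Hw) as H.
  apply Rmult_le_reg_r with (/ c); [apply Rinv_0_lt_compat; lra |].
  replace ((f w - p * c * w) * / c) with (f w / c - p * w) by (field; lra).
  replace ((f z - p * c * z) * / c) with (f z / c - p * z) by (field; lra).
  exact H.
Qed.

Definition loglin (a z : R) : R := if Rle_dec z a then z / a else 1 + ln (z / a).
Definition loglin_slope (a x : R) : R := / Rmax a x.

Section LogLinear.
Variable a : R.
Hypothesis a_pos : 0 < a.
Hypothesis a_lt1 : a < 1.

Lemma loglin_low (z : R) : z <= a -> loglin a z = z / a.
Proof. intros Hz. unfold loglin. destruct (Rle_dec z a); [reflexivity | lra]. Qed.

Lemma loglin_high (z : R) : a < z -> loglin a z = 1 + ln (z / a).
Proof. intros Hz. unfold loglin. destruct (Rle_dec z a); [lra | reflexivity]. Qed.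

Lemma slope_low (x : R) : x <= a -> loglin_slope a x = / a.
Proof. intros Hx. unfold loglin_slope. rewrite Rmax_left by lra. reflexivity. Qed.

Lemma slope_high (x : R) : a <= x -> loglin_slope a x = / x.
Proof. intros Hx. unfold loglin_slope. rewrite Rmax_right by lra. reflexivity. Qed.

Lemma loglin_one : loglin a 1 = 1 - ln a.
Proof.
  rewrite loglin_high by lra. unfold Rdiv. rewrite Rmult_1_l, ln_Rinv by lra. ring.
Qed.

Lemma loglin_one_pos : 0 < loglin a 1.
Proof.
  rewrite loglin_one. pose proof (ln_increasing a 1 a_pos a_lt1). rewrite ln_1 in *. lra.
Qed.

Lemma loglin_nonneg (z : R) : 0 <= z -> 0 <= loglin a z.
Proof.
  intros Hz. destruct (Rle_dec z a) as [Hza | Hza].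
  - rewrite loglin_low by lra. apply Rmult_le_pos; [lra | left; apply Rinv_0_lt_compat; lra].
  - rewrite loglin_high by lra.
    assert (Hq : 1 < z / a) by (apply Rmult_lt_reg_r with a; [lra | field_simplify; lra]).
    pose proof (ln_increasing 1 (z / a) ltac:(lra) Hq). rewrite ln_1 in *. lra.
Qed.

Lemma slope_pos (x : R) : 0 < loglin_slope a x.
Proof.
  unfold loglin_slope. apply Rinv_0_lt_compat. pose proof (Rmax_l a x). lra.
Qed.

Lemma slope_lipschitz : lipschitz01 (loglin_slope a) (/ (a * a)).
Proof.
  intros x y _ _. unfold loglin_slope.
  set (A := Rmax a x). set (B := Rmax a y).
  assert (HA : a <= A) by apply Rmax_l. assert (HB : a <= B) by apply Rmax_l.
  assert (HAB : Rabs (A - B) <= Rabs (y - x)).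
  { unfold A, B, Rmax. destruct (Rle_dec a x); destruct (Rle_dec a y);
    unfold Rabs; repeat destruct Rcase_abs; lra. }
  replace (/ B - / A) with ((A - B) * / (A * B)) by (field; lra).
  rewrite Rabs_mult, (Rabs_right (/ (A * B))) by (left; apply Rinv_0_lt_compat; nra).
  assert (/ (A * B) <= / (a * a)) by (apply Rinv_le_contravar; nra).
  pose proof (Rabs_pos (A - B)). pose proof (Rabs_pos (y - x)).
  assert (0 < / (A * B)) by (apply Rinv_0_lt_compat; nra).
  nra.
Qed.

Lemma loglin_strict_super (x y : R) : 0 <= x -> 0 <= y -> x <> y -> a < Rmax x y ->
  loglin a y < loglin a x + loglin_slope a x * (y - x).
Proof.
  intros Hx Hy Hxy Hmax.
  destruct (Rle_dec x a) as [Hxa | Hxa]; destruct (Rle_dec y a) as [Hya | Hya].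
  - exfalso. unfold Rmax in Hmax. destruct (Rle_dec x y); lra.
  - (* linear at x, logarithmic at y: 1 + ln (y/a) < y/a *)
    rewrite (loglin_low x), (loglin_high y), slope_low by lra.
    assert (Hya1 : y / a <> 1) by (apply div_neq_1; lra).
    pose proof (ln_lt_sub1 (y / a) ltac:(apply Rdiv_lt_0_compat; lra) Hya1).
    replace (x / a + / a * (y - x)) with (y / a) by (field; lra). lra.
  - (* logarithmic at x, linear at y: y/a - y/x <= 1 - a/x < ln (x/a) *)
    rewrite (loglin_low y), (loglin_high x), slope_high by lra.
    assert (Hax1 : a / x <> 1) by (apply div_neq_1; lra).
    pose proof (ln_lt_sub1 (a / x) ltac:(apply Rdiv_lt_0_compat; lra) Hax1).
    assert (Hinv : ln (a / x) = - ln (x / a)).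
    { rewrite <- ln_Rinv by (apply Rdiv_lt_0_compat; lra). f_equal. field. lra. }
    assert (Hyx : y * (/ a - / x) <= a * (/ a - / x)).
    { apply Rmult_le_compat_r; [| lra].
      assert (/ x < / a) by (apply Rinv_lt_contravar; nra). lra. }
    replace (a * (/ a - / x)) with (1 - a / x) in Hyx by (field; lra).
    replace (1 + ln (x / a) + / x * (y - x)) with (ln (x / a) + y / x) by (field; lra).
    unfold Rdiv in *. lra.
  - (* logarithmic at both: ln (y/a) = ln (y/x) + ln (x/a) and ln (y/x) < y/x - 1 *)
    rewrite !loglin_high, slope_high by lra.
    assert (Hyx1 : y / x <> 1) by (apply div_neq_1; lra).
    pose proof (ln_lt_sub1 (y / x) ltac:(apply Rdiv_lt_0_compat; lra) Hyx1).
    assert (Hsplit : ln (y / a) = ln (y / x) + ln (x / a)).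
    { rewrite <- ln_mult by (apply Rdiv_lt_0_compat; lra). f_equal. field. lra. }
    replace (/ x * (y - x)) with (y / x - 1) by (field; lra). lra.
Qed.

Lemma loglin_supergradient : supergradient01 (loglin a) (loglin_slope a).
Proof.
  intros x y [Hx _] [Hy _].
  destruct (Req_dec x y) as [-> | Hxy]; [lra |].
  destruct (Rle_dec (Rmax x y) a) as [Hle | Hgt].
  - pose proof (Rmax_l x y). pose proof (Rmax_r x y).
    rewrite !loglin_low, slope_low by lra.
    right. field. lra.
  - left. apply loglin_strict_super; lra.
Qed.

(* The revenue bound: at any unit price, a utility-maximizing buyer with valuation
   [loglin a] pays at most 1.  Beyond the kink, buying more than [1/P] is strictly
   worse than buying [max(a, 1/P)], where the slope is at most the price [P]. *)
Lemma loglin_revenue (P z : R) : 0 < P -> best_response (loglin a) P z -> P * z <= 1.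
Proof.
  intros HP [Hz Hbest].
  destruct (Rle_dec z a) as [Hza | Hza].
  - pose proof (Hbest 0 ltac:(lra)) as H0.
    rewrite !loglin_low in H0 by lra.
    assert (z / a <= 1) by (apply Rmult_le_reg_r with a; [lra | field_simplify; lra]).
    unfold Rdiv in *. lra.
  - apply Rnot_lt_le. intros HPz.
    set (w := Rmax a (/ P)).
    assert (Haw : a <= w) by apply Rmax_l.
    assert (HPw : / P <= w) by apply Rmax_r.
    assert (Hinvz : / P < z).
    { apply Rmult_lt_reg_l with P; [lra |]. rewrite Rinv_r by lra. lra. }
    assert (Hwz : w < z) by (apply Rmax_lub_lt; lra).
    assert (Hslope : loglin_slope a w <= P).
    { rewrite slope_high by lra. rewrite <- (Rinv_inv P).
      apply Rinv_le_contravar; [apply Rinv_0_lt_compat |]; lra. }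
    assert (Hstrict : loglin a z < loglin a w + loglin_slope a w * (z - w)).
    { apply loglin_strict_super; try lra. rewrite Rmax_right; lra. }
    pose proof (Hbest w ltac:(lra)). nra.
Qed.
End LogLinear.

Lemma exists_rate (kappa : R) : 1 < kappa -> exists t : R, 0 < t /\ exp t = kappa * (1 + t).
Proof.
  intros Hk.
  set (g := fun t => exp t - kappa * (1 + t)).
  assert (Hcont : continuity g) by (unfold g; apply derivable_continuous; reg).
  assert (Hg0 : g 0 < 0) by (unfold g; rewrite exp_0; lra).
  assert (Hgbig : 0 < g (4 * kappa)).
  { unfold g. replace (4 * kappa) with (2 * kappa + 2 * kappa) by ring.
    rewrite exp_plus. pose proof (exp_ineq1_le (2 * kappa)). nra. }
  destruct (IVT g 0 (4 * kappa) Hcont ltac:(lra) Hg0 Hgbig) as [t [Ht Hgt]].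
  unfold g in Hgt. exists t. split; [| lra].
  destruct (Rle_lt_or_eq_dec 0 t (proj1 Ht)) as [Hpos | <-]; [exact Hpos |].
  rewrite exp_0 in Hgt. lra.
Qed.

Lemma kink_of_rate (t : R) : 0 < t ->
  0 < exp (- t) /\ exp (- t) < 1 /\ loglin (exp (- t)) 1 = 1 + t.
Proof.
  intros Ht. assert (Hexp : 1 < exp t) by (pose proof (exp_ineq1 t ltac:(lra)); lra).
  assert (Ha1 : exp (- t) < 1).
  { rewrite exp_Ropp, <- Rinv_1. apply Rinv_lt_contravar; lra. }
  split; [apply exp_pos | split; [exact Ha1 |]].
  rewrite loglin_one by (exact Ha1 || apply exp_pos). rewrite ln_exp. ring.
Qed.

(* Since kappa = e^t / (1 + t) <= e^t, the rate t dominates ln kappa. *)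
Lemma ln_kappa_le_rate (kappa t : R) : 0 < t -> exp t = kappa * (1 + t) -> ln kappa <= t.
Proof.
  intros Ht Hrate.
  assert (Hln : ln kappa = t - ln (1 + t)).
  { replace kappa with (exp t * / (1 + t)) by (field_simplify_eq; lra).
    rewrite ln_mult, ln_Rinv, ln_exp by (try apply exp_pos; try apply Rinv_0_lt_compat; lra).
    ring. }
  pose proof (ln_increasing 1 (1 + t) ltac:(lra) ltac:(lra)). rewrite ln_1 in *. lra.
Qed.

Definition normalized (a z : R) : R := loglin a z / loglin a 1.

Section Normalized.
Variable a : R.
Hypothesis a_pos : 0 < a.
Hypothesis a_lt1 : a < 1.

Let rho_pos : 0 < loglin a 1 := loglin_one_pos a a_pos a_lt1.

Lemma normalized_supergradient :
  supergradient01 (normalized a) (fun x => loglin_slope a x / loglin a 1).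
Proof. apply supergradient_scale; [exact rho_pos | apply loglin_supergradient; assumption]. Qed.

Lemma normalized_deriv (x : R) : 0 <= x <= 1 ->
  deriv01 (normalized a) x (loglin_slope a x / loglin a 1).
Proof.
  intros Hx. apply (supergradient_deriv _ _ normalized_supergradient (/ (a * a) / loglin a 1)).
  - apply lipschitz_scale; [exact rho_pos | apply slope_lipschitz; exact a_pos].
  - exact Hx.
Qed.

Lemma normalized_one : normalized a 1 = 1.
Proof. unfold normalized. field. pose proof rho_pos. lra. Qed.

Lemma normalized_nonneg : nonneg01 (normalized a).
Proof.
  intros x Hx. unfold normalized. apply Rmult_le_pos; [apply loglin_nonneg; lra | left; apply Rinv_0_lt_compat, rho_pos].
Qed.

Lemma normalized_nondecreasing : nondecreasing01 (normalized a).
Proof.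
  apply (supergradient_nondecreasing _ _ normalized_supergradient).
  intros x _. apply Rlt_le, Rdiv_lt_0_compat; [apply slope_pos | exact rho_pos]; lra.
Qed.

Lemma normalized_revenue (p z : R) : 0 < p -> best_response (normalized a) p z ->
  p * z <= / loglin a 1 * normalized a 1.
Proof.
  intros Hp Hbest.
  pose proof (loglin_revenue a a_pos a_lt1 (p * loglin a 1) z
                ltac:(pose proof rho_pos; nra) (best_response_scale _ _ _ _ rho_pos Hbest)).
  rewrite normalized_one, Rmult_1_r.
  apply Rmult_le_reg_l with (loglin a 1); [exact rho_pos |].
  rewrite Rinv_r by (pose proof rho_pos; lra). lra.
Qed.
End Normalized.

Theorem mainTheorem12 :
  forall kappa : R, 1 < kappa ->
  exists (rho : R) (v : R -> R) (d0 : R),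
    1 + ln kappa <= rho /\
    nonneg01 v /\ nondecreasing01 v /\ concave01 v /\ differentiable01 v /\
    v 1 = 1 /\ deriv01 v 0 d0 /\ d0 / v 1 = kappa /\
    (forall p z : R, 0 < p -> best_response v p z -> p * z <= (/ rho) * v 1).
Proof.
  intros kappa Hk.
  destruct (exists_rate kappa Hk) as [t [Ht Hrate]].
  set (a := exp (- t)).
  destruct (kink_of_rate t Ht) as [Ha [Ha1 Hrho]]; fold a in Ha, Ha1, Hrho.
  exists (loglin a 1), (normalized a), (loglin_slope a 0 / loglin a 1).
  repeat split.
  - rewrite Hrho. pose proof (ln_kappa_le_rate kappa t Ht Hrate). lra.
  - apply normalized_nonneg; assumption.
  - apply normalized_nondecreasing; assumption.
  - exact (supergradient_concave _ _ (normalized_supergradient a Ha Ha1)).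
  - intros x Hx. eexists. apply normalized_deriv; assumption.
  - apply normalized_one; assumption.
  - apply normalized_deriv; lra.
  - (* curvature: (1 / a) / rho = e^t / (1 + t) = kappa *)
    rewrite normalized_one, Rdiv_1_r, slope_low, Hrho by lra.
    unfold a. rewrite exp_Ropp, Rinv_inv. field_simplify_eq; lra.
  - apply normalized_revenue; assumption.
Qed.
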